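(* Let $\Gamma$ be a finite multiset of freshness and equality formulas well-formed in a context $\Sigma$. If $\Sigma;\Gamma\Rightarrow\bot$ is derivable in the sequent calculus $NL^{\Rightarrow}$, then $\Gamma$ is unsatisfiable, i.e. there is no interpretation $\theta$ with $\theta:\Sigma$ and $\theta\models A$ for every $A\in\Gamma$.
   Context: Sequent calculus $NL^{\Rightarrow}$. Types $\tau ::= \delta \mid \nu \mid \langle\nu\rangle\tau$ ($\delta$ data types, $\nu$ name types). Terms $t ::= x \mid \mathsf{a} \mid c \mid f(\vec t)$ over variables $x$ and a disjoint countably infinite set of name-symbols $\mathsf a$; the signature contains, for all $\nu,\tau$, swapping $(a\;b)\cdot t$, abstraction $\langle a\rangle t$ (type $\langle\nu\rangle\tau$), equality $t\approx u$, freshness $a\#t$, besides constants $c$, function symbols $f$ and relation symbols $p$. Formulas: $\top,\bot$, atoms, $\wedge,\vee,\supset,\forall x{:}\tau,\exists x{:}\tau$, and $\mathsf N\mathsf a{:}\nu.\phi$ (binding the name-symbol $\mathsf a$). Contexts $\Sigma::=\cdot\mid\Sigma,x{:}\tau\mid\Sigma\#\mathsf a{:}\nu$ (no symbol twice; $\Sigma\#\mathsf a{:}\nu$ means $\mathsf a$ is fresh for everything in $\Sigma$); $Tm_\Sigma$ = terms well-typed in $\Sigma$; $|\cdot|=\emptyset$, $|\Sigma,x{:}\tau|=|\Sigma|$, $|\Sigma\#\mathsf a{:}\nu|=|\Sigma|\cup\{\mathsf a\#t\mid t\in Tm_\Sigma\}$. Rules for $\Sigma;\Gamma\Rightarrow\Delta$: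 (i) classical G3c rules (atomic initial sequents, $\top R$, $\bot L$, context-sharing left/right rules for $\wedge,\vee,\supset,\forall,\exists$, eigenvariables added to $\Sigma$); (ii) $\mathsf N R$: from $\Sigma\#\mathsf a{:}\nu;\Gamma\Rightarrow\phi,\Delta$ infer $\Sigma;\Gamma\Rightarrow\mathsf N\mathsf a{:}\nu.\phi,\Delta$; $\mathsf N L$: from $\Sigma\#\mathsf a{:}\nu;\Gamma,\phi\Rightarrow\Delta$ infer $\Sigma;\Gamma,\mathsf N\mathsf a{:}\nu.\phi\Rightarrow\Delta$ ($\mathsf a\notin\Sigma$); (iii) $\approx R$: from $\Sigma;\Gamma,t\approx t\Rightarrow\Delta$ infer $\Sigma;\Gamma\Rightarrow\Delta$; $\approx S$: from $\Sigma;\Gamma,t\approx u,P(t),P(u)\Rightarrow\Delta$ infer $\Sigma;\Gamma,t\approx u,P(t)\Rightarrow\Delta$ ($P$ atomic); for each instance $\bigwedge_j P_j\supset\bigvee_{i\le m}Q_i$ ($m\ge0$) of (S1) $(a\;a)\cdot x\approx x$, (S2) $(a\;b)\cdot(a\;b)\cdot x\approx x$, (S3) $(a\;b)\cdot a\approx b$, (E1) $(a\;b)\cdot c\approx c$, (E2) $(a\;b)\cdot f(\vec t)\approx f((a\;b)\cdot\vec t)$, (E3) $p(\vec t)\supset p((a\;b)\cdot\vec t)$, (F1) $a\#x\wedge b\#x\supset(a\;b)\cdot x\approx x$, (F2) $a\#b$ ($a,b$ of distinct name types), (F3) $a\#a\supset\bot$, (F4) $a\#b\vee a\approx b$, (A1)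 $a\#y\wedge x\approx(a\;b)\cdot y\supset\langle a\rangle x\approx\langle b\rangle y$ (arbitrary well-typed terms), the rule: from $\Sigma;\Gamma,\vec P,Q_i\Rightarrow\Delta$ for all $i$ infer $\Sigma;\Gamma,\vec P\Rightarrow\Delta$; (A2) from $\Sigma;\Gamma,E,a\approx b,t\approx u\Rightarrow\Delta$ and $\Sigma;\Gamma,E,a\#u,t\approx(a\;b)\cdot u\Rightarrow\Delta$ infer $\Sigma;\Gamma,E\Rightarrow\Delta$, $E$ being $\langle a\rangle t\approx\langle b\rangle u$; (A3) from $\Sigma\vdash t:\langle\nu\rangle\sigma$ and $\Sigma,a{:}\nu,x{:}\sigma;\Gamma,t\approx\langle a\rangle x\Rightarrow\Delta$ ($a,x\notin\Sigma$) infer $\Sigma;\Gamma\Rightarrow\Delta$; (F) from $\Sigma\#\mathsf a{:}\nu;\Gamma\Rightarrow\Delta$ ($\mathsf a\notin\Sigma$) infer $\Sigma;\Gamma\Rightarrow\Delta$; ($\Sigma\#$) from $\Sigma;\Gamma,\mathsf a\#t\Rightarrow\Delta$ with $\mathsf a\#t\in|\Sigma|$ infer $\Sigma;\Gamma\Rightarrow\Delta$. Herbrand model. $Tm$: ground swapping-free terms $t::=\mathsf a\mid c\mid f(\vec t)\mid\langle\mathsf a\rangle t$. Syntactic swapping: $(\mathsf a\;\mathsf b)\cdot\mathsf a=\mathsf b$, $(\mathsf a\;\mathsf b)\cdot\mathsf b=\mathsf a$, $(\mathsf a\;\mathsf b)\cdot\mathsf c=\mathsf c$ ($\mathsf c\ne\mathsf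 a,\mathsf b$), $(\mathsf a\;\mathsf b)\cdot c=c$, $(\mathsf a\;\mathsf b)\cdot f(\vec t)=f((\mathsf a\;\mathsf b)\cdot\vec t)$, $(\mathsf a\;\mathsf b)\cdot\langle\mathsf c\rangle t=\langle(\mathsf a\;\mathsf b)\cdot\mathsf c\rangle((\mathsf a\;\mathsf b)\cdot t)$. Freshness (inductive): $\mathsf a\#\mathsf b$ if $\mathsf a\ne\mathsf b$; $\mathsf a\#c$; $\mathsf a\#f(\vec t)$ if $\mathsf a\#t_i$ for all $i$; $\mathsf a\#\langle\mathsf a\rangle t$; $\mathsf a\#\langle\mathsf b\rangle t$ if $\mathsf a\ne\mathsf b$ and $\mathsf a\#t$. Equality (inductive): $\mathsf a\approx\mathsf a$; $c\approx c$; $f(\vec t)\approx f(\vec u)$ if $t_i\approx u_i$ for all $i$; $\langle\mathsf a\rangle t\approx\langle\mathsf a\rangle u$ if $t\approx u$; $\langle\mathsf a\rangle t\approx\langle\mathsf b\rangle u$ if $\mathsf a\ne\mathsf b$, $\mathsf a\#u$ and $t\approx(\mathsf a\;\mathsf b)\cdot u$. This $\approx$ is an equivalence relation and $\approx,\#$ are preserved by swapping; $NTm=Tm/{\approx}$. An interpretation $\theta$ maps variables to elements of $NTm$ and extends to terms by $\theta(\mathsf a)=\mathsf a$, $\theta(c)=c$, $\theta(f(\vec t))=f(\theta(t_1),\dots,\theta(t_n))$, $\theta((a\;b)\cdot t)=(\theta(a)\;\theta(b))\cdot\theta(t)$, $\theta(\langle a\rangle t)=\langle\theta(a)\rangle\theta(t)$.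 $\theta\models t\approx u$ iff $\theta(t)\approx\theta(u)$; $\theta\models a\#t$ iff $\theta(a)\#\theta(t)$. $\theta:\Sigma$ means $\theta(x)$ has the type $\Sigma$ assigns to $x$ for each variable $x$ of $\Sigma$, and $\mathsf a\#\theta(x)$ for each $\mathsf a\#x\in|\Sigma|$. *)

From Stdlib Require Import List Bool Arith Permutation.
Import ListNotations.
Set Implicit Arguments.

Inductive ty : Type :=
| TD (d : nat)
| TN (nu : nat)
| TA (nu : nat) (t : ty).

(* Name-symbols: a name-symbol of name type nu is a pair (nu, n);
   hence each name type has a countably infinite supply of symbols,
   and the supplies of distinct name types are disjoint. *)
Definition name : Type := (nat * nat)%type.
Definition name_ty (a : name) : nat := fst a.
Definition name_eqb (a b : name) : bool :=
  Nat.eqb (fst a) (fst b) && Nat.eqb (snd a) (snd b).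

Record signature : Type := {
  con : Type;
  fsym : Type;
  rsym : Type;
  con_ty : con -> nat;
  fsym_args : fsym -> list ty;
  fsym_res : fsym -> nat;
  rsym_args : rsym -> list ty
}.
Arguments con_ty {_}. Arguments fsym_args {_}. Arguments fsym_res {_}. Arguments rsym_args {_}.

(* Terms, locally nameless: FVar = (free) variable, BVar = bound variable
   (de Bruijn index, bound by forall/exists), FNm = name-symbol,
   BNm = bound name-symbol (de Bruijn index, bound by the N-quantifier). *)
Inductive term (Sig : signature) : Type :=
| FVar (x : nat)
| BVar (i : nat)
| FNm (a : name)
| BNm (i : nat)
| TCon (c : con Sig)
| TApp (f : fsym Sig) (ts : list (term Sig))
| TSwap (a b t : term Sig)
| TAbs (a t : term Sig).
Arguments FVar {Sig}. Arguments BVar {Sig}. Arguments FNm {Sig}. Arguments BNm {Sig}.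
Arguments TCon {Sig}. Arguments TApp {Sig}. Arguments TSwap {Sig}. Arguments TAbs {Sig}.

Inductive form (Sig : signature) : Type :=
| FTop | FBot
| FEq (t u : term Sig)
| FFr (a t : term Sig)
| FRel (p : rsym Sig) (ts : list (term Sig))
| FAnd (p q : form Sig) | FOr (p q : form Sig) | FImp (p q : form Sig)
| FAll (tau : ty) (p : form Sig)
| FEx (tau : ty) (p : form Sig)
| FNew (nu : nat) (p : form Sig).
Arguments FTop {Sig}. Arguments FBot {Sig}. Arguments FEq {Sig}. Arguments FFr {Sig}.
Arguments FRel {Sig}. Arguments FAnd {Sig}. Arguments FOr {Sig}. Arguments FImp {Sig}.
Arguments FAll {Sig}. Arguments FEx {Sig}. Arguments FNew {Sig}.

Definition is_atom (Sig : signature) (p : form Sig) : Prop :=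
  match p with FEq _ _ | FFr _ _ | FRel _ _ => True | _ => False end.

Definition is_eq_or_fresh (Sig : signature) (p : form Sig) : Prop :=
  match p with FEq _ _ | FFr _ _ => True | _ => False end.

Fixpoint open_tv (Sig : signature) (k : nat) (u : term Sig) (t : term Sig) : term Sig :=
  match t with
  | BVar i => if Nat.eqb i k then u else BVar i
  | TApp f ts => TApp f (map (open_tv k u) ts)
  | TSwap a b t => TSwap (open_tv k u a) (open_tv k u b) (open_tv k u t)
  | TAbs a t => TAbs (open_tv k u a) (open_tv k u t)
  | t => t
  end.

Fixpoint open_tn (Sig : signature) (k : nat) (c : name) (t : term Sig) : term Sig :=
  match t with
  | BNm i => if Nat.eqb i k then FNm c else BNm i
  | TApp f ts => TApp f (map (open_tn k c) ts)
  | TSwap a b t => TSwap (open_tn k c a) (open_tn k c b) (open_tn k c t)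
  | TAbs a t => TAbs (open_tn k c a) (open_tn k c t)
  | t => t
  end.

Fixpoint open_fv (Sig : signature) (k : nat) (u : term Sig) (p : form Sig) : form Sig :=
  match p with
  | FTop => FTop | FBot => FBot
  | FEq t1 t2 => FEq (open_tv k u t1) (open_tv k u t2)
  | FFr a t => FFr (open_tv k u a) (open_tv k u t)
  | FRel r ts => FRel r (map (open_tv k u) ts)
  | FAnd p q => FAnd (open_fv k u p) (open_fv k u q)
  | FOr p q => FOr (open_fv k u p) (open_fv k u q)
  | FImp p q => FImp (open_fv k u p) (open_fv k u q)
  | FAll tau p => FAll tau (open_fv (S k) u p)
  | FEx tau p => FEx tau (open_fv (S k) u p)
  | FNew nu p => FNew nu (open_fv k u p)
  end.

Fixpoint open_fn (Sig : signature) (k : nat) (c : name) (p : form Sig) : form Sig :=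
  match p with
  | FTop => FTop | FBot => FBot
  | FEq t1 t2 => FEq (open_tn k c t1) (open_tn k c t2)
  | FFr a t => FFr (open_tn k c a) (open_tn k c t)
  | FRel r ts => FRel r (map (open_tn k c) ts)
  | FAnd p q => FAnd (open_fn k c p) (open_fn k c q)
  | FOr p q => FOr (open_fn k c p) (open_fn k c q)
  | FImp p q => FImp (open_fn k c p) (open_fn k c q)
  | FAll tau p => FAll tau (open_fn k c p)
  | FEx tau p => FEx tau (open_fn k c p)
  | FNew nu p => FNew nu (open_fn (S k) c p)
  end.

(* Contexts  Sigma ::= . | Sigma, x:tau | Sigma # a:nu .
   Represented as a list whose HEAD is the most recent entry. *)
Inductive centry : Type :=
| CVar (x : nat) (tau : ty)
| CNm (a : name).
Definition ctx : Type := list centry.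

Definition csym (e : centry) : nat + name :=
  match e with CVar x _ => inl x | CNm a => inr a end.

Definition ctx_ok (Sg : ctx) : Prop := NoDup (map csym Sg).

Definition var_notin (x : nat) (Sg : ctx) : Prop := forall tau, ~ In (CVar x tau) Sg.
Definition nm_notin (a : name) (Sg : ctx) : Prop := ~ In (CNm a) Sg.

(* Typing of (possibly open) terms: Bv / Bn are the types of the bound
   variables / bound name-symbols (de Bruijn). *)
Inductive typ (Sig : signature) (Sg : ctx) (Bv : list ty) (Bn : list nat)
  : term Sig -> ty -> Prop :=
| ty_fvar x tau : In (CVar x tau) Sg -> typ Sg Bv Bn (FVar x) tau
| ty_bvar i tau : nth_error Bv i = Some tau -> typ Sg Bv Bn (BVar i) tau
| ty_fnm a : In (CNm a) Sg -> typ Sg Bv Bn (FNm a) (TN (name_ty a))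
| ty_bnm i nu : nth_error Bn i = Some nu -> typ Sg Bv Bn (BNm i) (TN nu)
| ty_con c : typ Sg Bv Bn (TCon c) (TD (con_ty c))
| ty_app f ts : Forall2 (typ Sg Bv Bn) ts (fsym_args f) ->
    typ Sg Bv Bn (TApp f ts) (TD (fsym_res f))
| ty_swap nu a b t tau : typ Sg Bv Bn a (TN nu) -> typ Sg Bv Bn b (TN nu) ->
    typ Sg Bv Bn t tau -> typ Sg Bv Bn (TSwap a b t) tau
| ty_abs nu a t tau : typ Sg Bv Bn a (TN nu) -> typ Sg Bv Bn t tau ->
    typ Sg Bv Bn (TAbs a t) (TA nu tau).

Definition wt (Sig : signature) (Sg : ctx) (t : term Sig) (tau : ty) : Prop :=
  typ Sg [] [] t tau.
Definition in_Tm (Sig : signature) (Sg : ctx) (t : term Sig) : Prop :=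
  exists tau, wt Sg t tau.

Inductive wff (Sig : signature) (Sg : ctx) : list ty -> list nat -> form Sig -> Prop :=
| wf_top Bv Bn : wff Sg Bv Bn FTop
| wf_bot Bv Bn : wff Sg Bv Bn FBot
| wf_eq Bv Bn t u tau : typ Sg Bv Bn t tau -> typ Sg Bv Bn u tau -> wff Sg Bv Bn (FEq t u)
| wf_fr Bv Bn a t nu tau : typ Sg Bv Bn a (TN nu) -> typ Sg Bv Bn t tau ->
    wff Sg Bv Bn (FFr a t)
| wf_rel Bv Bn r ts : Forall2 (typ Sg Bv Bn) ts (rsym_args r) -> wff Sg Bv Bn (FRel r ts)
| wf_and Bv Bn p q : wff Sg Bv Bn p -> wff Sg Bv Bn q -> wff Sg Bv Bn (FAnd p q)
| wf_or Bv Bn p q : wff Sg Bv Bn p -> wff Sg Bv Bn q -> wff Sg Bv Bn (FOr p q)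
| wf_imp Bv Bn p q : wff Sg Bv Bn p -> wff Sg Bv Bn q -> wff Sg Bv Bn (FImp p q)
| wf_all Bv Bn tau p : wff Sg (tau :: Bv) Bn p -> wff Sg Bv Bn (FAll tau p)
| wf_ex Bv Bn tau p : wff Sg (tau :: Bv) Bn p -> wff Sg Bv Bn (FEx tau p)
| wf_new Bv Bn nu p : wff Sg Bv (nu :: Bn) p -> wff Sg Bv Bn (FNew nu p).

(* |Sigma| : the freshness formulas  a # t  with t in Tm_Sigma' where
   Sigma = Sigma' # a, ... *)
Inductive in_bars (Sig : signature) : ctx -> term Sig -> term Sig -> Prop :=
| bars_here Sg a t : in_Tm Sg t -> in_bars (CNm a :: Sg) (FNm a) t
| bars_there e Sg a t : in_bars Sg a t -> in_bars (e :: Sg) a t.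

(* Axiom instances  /\_j P_j  =>  \/_{i<=m} Q_i  (terms well-typed in Sigma). *)
Inductive ax_inst (Sig : signature) (Sg : ctx) : list (form Sig) -> list (form Sig) -> Prop :=
| ax_S1 nu a x tau : wt Sg a (TN nu) -> wt Sg x tau ->
    ax_inst Sg [] [FEq (TSwap a a x) x]
| ax_S2 nu a b x tau : wt Sg a (TN nu) -> wt Sg b (TN nu) -> wt Sg x tau ->
    ax_inst Sg [] [FEq (TSwap a b (TSwap a b x)) x]
| ax_S3 nu a b : wt Sg a (TN nu) -> wt Sg b (TN nu) ->
    ax_inst Sg [] [FEq (TSwap a b a) b]
| ax_E1 nu a b c : wt Sg a (TN nu) -> wt Sg b (TN nu) ->
    ax_inst Sg [] [FEq (TSwap a b (TCon c)) (TCon c)]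
| ax_E2_app nu a b f ts : wt Sg a (TN nu) -> wt Sg b (TN nu) ->
    in_Tm Sg (TApp f ts) ->
    ax_inst Sg [] [FEq (TSwap a b (TApp f ts)) (TApp f (map (TSwap a b) ts))]
| ax_E2_swap nu a b c d t : wt Sg a (TN nu) -> wt Sg b (TN nu) ->
    in_Tm Sg (TSwap c d t) ->
    ax_inst Sg [] [FEq (TSwap a b (TSwap c d t))
                       (TSwap (TSwap a b c) (TSwap a b d) (TSwap a b t))]
| ax_E2_abs nu a b c t : wt Sg a (TN nu) -> wt Sg b (TN nu) ->
    in_Tm Sg (TAbs c t) ->
    ax_inst Sg [] [FEq (TSwap a b (TAbs c t)) (TAbs (TSwap a b c) (TSwap a b t))]
| ax_E3_rel nu a b r ts : wt Sg a (TN nu) -> wt Sg b (TN nu) ->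
    wff Sg [] [] (FRel r ts) ->
    ax_inst Sg [FRel r ts] [FRel r (map (TSwap a b) ts)]
| ax_E3_eq nu a b t u : wt Sg a (TN nu) -> wt Sg b (TN nu) ->
    wff Sg [] [] (FEq t u) ->
    ax_inst Sg [FEq t u] [FEq (TSwap a b t) (TSwap a b u)]
| ax_E3_fr nu a b c t : wt Sg a (TN nu) -> wt Sg b (TN nu) ->
    wff Sg [] [] (FFr c t) ->
    ax_inst Sg [FFr c t] [FFr (TSwap a b c) (TSwap a b t)]
| ax_F1 nu a b x tau : wt Sg a (TN nu) -> wt Sg b (TN nu) -> wt Sg x tau ->
    ax_inst Sg [FFr a x; FFr b x] [FEq (TSwap a b x) x]
| ax_F2 nu1 nu2 a b : nu1 <> nu2 -> wt Sg a (TN nu1) -> wt Sg b (TN nu2) ->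
    ax_inst Sg [] [FFr a b]
| ax_F3 nu a : wt Sg a (TN nu) ->
    ax_inst Sg [FFr a a] []
| ax_F4 nu a b : wt Sg a (TN nu) -> wt Sg b (TN nu) ->
    ax_inst Sg [] [FFr a b; FEq a b]
| ax_A1 nu a b x y tau : wt Sg a (TN nu) -> wt Sg b (TN nu) ->
    wt Sg x tau -> wt Sg y tau ->
    ax_inst Sg [FFr a y; FEq x (TSwap a b y)] [FEq (TAbs a x) (TAbs b y)].

(* Derivability of  Sigma ; Gamma => Delta  in NL^=>.  Gamma, Delta are
   multisets, represented as lists closed under permutation. *)
Inductive deriv (Sig : signature) : ctx -> list (form Sig) -> list (form Sig) -> Prop :=
| d_permL Sg G G' D : Permutation G G' -> deriv Sg G D -> deriv Sg G' D
| d_permR Sg G D D' : Permutation D D' -> deriv Sg G D -> deriv Sg G D'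
| d_init Sg G D P : is_atom P -> deriv Sg (P :: G) (P :: D)
| d_topR Sg G D : deriv Sg G (FTop :: D)
| d_botL Sg G D : deriv Sg (FBot :: G) D
| d_andL Sg G D A B : deriv Sg (A :: B :: G) D -> deriv Sg (FAnd A B :: G) D
| d_andR Sg G D A B : deriv Sg G (A :: D) -> deriv Sg G (B :: D) ->
    deriv Sg G (FAnd A B :: D)
| d_orL Sg G D A B : deriv Sg (A :: G) D -> deriv Sg (B :: G) D ->
    deriv Sg (FOr A B :: G) D
| d_orR Sg G D A B : deriv Sg G (A :: B :: D) -> deriv Sg G (FOr A B :: D)
| d_impL Sg G D A B : deriv Sg G (A :: D) -> deriv Sg (B :: G) D ->
    deriv Sg (FImp A B :: G) D
| d_impR Sg G D A B : deriv Sg (A :: G) (B :: D) -> deriv Sg G (FImp A B :: D)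
| d_allL Sg G D tau A t : wt Sg t tau ->
    deriv Sg (open_fv 0 t A :: FAll tau A :: G) D -> deriv Sg (FAll tau A :: G) D
| d_allR Sg G D tau A x : var_notin x Sg ->
    deriv (CVar x tau :: Sg) G (open_fv 0 (FVar x) A :: D) ->
    deriv Sg G (FAll tau A :: D)
| d_exL Sg G D tau A x : var_notin x Sg ->
    deriv (CVar x tau :: Sg) (open_fv 0 (FVar x) A :: G) D ->
    deriv Sg (FEx tau A :: G) D
| d_exR Sg G D tau A t : wt Sg t tau ->
    deriv Sg G (open_fv 0 t A :: FEx tau A :: D) -> deriv Sg G (FEx tau A :: D)
| d_newR Sg G D nu A a : nm_notin a Sg -> name_ty a = nu ->
    deriv (CNm a :: Sg) G (open_fn 0 a A :: D) -> deriv Sg G (FNew nu A :: D)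
| d_newL Sg G D nu A a : nm_notin a Sg -> name_ty a = nu ->
    deriv (CNm a :: Sg) (open_fn 0 a A :: G) D -> deriv Sg (FNew nu A :: G) D
| d_eqR Sg G D t : in_Tm Sg t -> deriv Sg (FEq t t :: G) D -> deriv Sg G D
| d_eqS Sg G D t u P : is_atom P ->
    deriv Sg (open_fv 0 u P :: FEq t u :: open_fv 0 t P :: G) D ->
    deriv Sg (FEq t u :: open_fv 0 t P :: G) D
| d_ax Sg G D Ps Qs : ax_inst Sg Ps Qs ->
    (forall Q, In Q Qs -> deriv Sg (Q :: Ps ++ G) D) ->
    deriv Sg (Ps ++ G) D
| d_A2 Sg G D a b t u :
    deriv Sg (FEq a b :: FEq t u :: FEq (TAbs a t) (TAbs b u) :: G) D ->
    deriv Sg (FFr a u :: FEq t (TSwap a b u) :: FEq (TAbs a t) (TAbs b u) :: G) D ->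
    deriv Sg (FEq (TAbs a t) (TAbs b u) :: G) D
| d_A3 Sg G D t nu sigma a x : wt Sg t (TA nu sigma) ->
    var_notin a Sg -> var_notin x Sg -> a <> x ->
    deriv (CVar x sigma :: CVar a (TN nu) :: Sg)
          (FEq t (TAbs (FVar a) (FVar x)) :: G) D ->
    deriv Sg G D
| d_F Sg G D a : nm_notin a Sg -> deriv (CNm a :: Sg) G D -> deriv Sg G D
| d_SigmaFr Sg G D a t : in_bars Sg a t -> deriv Sg (FFr a t :: G) D -> deriv Sg G D.

(* Herbrand model: ground swapping-free terms. *)
Inductive gterm (Sig : signature) : Type :=
| GNm (a : name)
| GCon (c : con Sig)
| GApp (f : fsym Sig) (ts : list (gterm Sig))
| GAbs (a : name) (t : gterm Sig).
Arguments GNm {Sig}. Arguments GCon {Sig}. Arguments GApp {Sig}. Arguments GAbs {Sig}.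

Definition nswap (a b c : name) : name :=
  if name_eqb c a then b else if name_eqb c b then a else c.

Fixpoint gswap (Sig : signature) (a b : name) (t : gterm Sig) : gterm Sig :=
  match t with
  | GNm c => GNm (nswap a b c)
  | GCon c => GCon c
  | GApp f ts => GApp f (map (gswap a b) ts)
  | GAbs c t => GAbs (nswap a b c) (gswap a b t)
  end.

Inductive gfresh (Sig : signature) : name -> gterm Sig -> Prop :=
| gf_nm a b : a <> b -> gfresh a (GNm b)
| gf_con a c : gfresh a (GCon c)
| gf_app a f ts : Forall (gfresh a) ts -> gfresh a (GApp f ts)
| gf_abs_same a t : gfresh a (GAbs a t)
| gf_abs a b t : a <> b -> gfresh a t -> gfresh a (GAbs b t).

Inductive geq (Sig : signature) : gterm Sig -> gterm Sig -> Prop :=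
| ge_nm a : geq (GNm a) (GNm a)
| ge_con c : geq (GCon c) (GCon c)
| ge_app f ts us : Forall2 (@geq Sig) ts us -> geq (GApp f ts) (GApp f us)
| ge_abs_same a t u : geq t u -> geq (GAbs a t) (GAbs a u)
| ge_abs a b t u : a <> b -> gfresh a u -> geq t (gswap a b u) ->
    geq (GAbs a t) (GAbs b u).

Inductive gtyped (Sig : signature) : gterm Sig -> ty -> Prop :=
| gt_nm a : gtyped (GNm a) (TN (name_ty a))
| gt_con c : gtyped (GCon c) (TD (con_ty c))
| gt_app f ts : Forall2 (@gtyped Sig) ts (fsym_args f) -> gtyped (GApp f ts) (TD (fsym_res f))
| gt_abs a t tau : gtyped t tau -> gtyped (GAbs a t) (TA (name_ty a) tau).

(* An interpretation maps variables to (representatives of) elements of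
   NTm = Tm / ~ .  All notions below respect ~ . *)
Definition interp (Sig : signature) : Type := nat -> gterm Sig.

Fixpoint eval (Sig : signature) (th : interp Sig) (t : term Sig) : gterm Sig :=
  match t with
  | FVar x => th x
  | BVar _ => GNm (0, 0)                 (* junk: never well-typed *)
  | FNm a => GNm a
  | BNm _ => GNm (0, 0)                  (* junk: never well-typed *)
  | TCon c => GCon c
  | TApp f ts => GApp f (map (eval th) ts)
  | TSwap a b t =>
      match eval th a, eval th b with
      | GNm a', GNm b' => gswap a' b' (eval th t)
      | _, _ => eval th t                (* junk: ill-typed *)
      end
  | TAbs a t =>
      match eval th a with
      | GNm a' => GAbs a' (eval th t)
      | _ => eval th t                   (* junk: ill-typed *)
      end
  end.

Definition sat (Sig : signature) (th : interp Sig) (A : form Sig) : Prop :=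
  match A with
  | FEq t u => geq (eval th t) (eval th u)
  | FFr a t =>
      match eval th a with
      | GNm a' => gfresh a' (eval th t)
      | _ => False
      end
  | _ => False
  end.

Definition interp_of (Sig : signature) (th : interp Sig) (Sg : ctx) : Prop :=
  (forall x tau, In (CVar x tau) Sg -> gtyped (th x) tau) /\
  (forall a x, in_bars Sg (FNm a) (@FVar Sig x) -> gfresh a (th x)).

From Stdlib Require Import List Arith Permutation Lia.
Import ListNotations.

(* In a derivation of [Sg; G => ⊥] whose antecedent consists of well-formed equality and
   freshness formulas, no logical rule can occur last (its principal formula is neither ⊥ on
   the right nor atomic on the left), and the premises of the remaining rules -- permutation,
   ≈R, ≈S, the nominal axioms, A2, A3, F and Σ# -- have the same shape.  So it suffices that
   each of these rules preserves satisfiability in the Herbrand model.  The nominal axioms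
   hold there because swapping, freshness and α-equivalence of ground terms are equivariant and
   α-equivalence is an equivalence relation.  For A3 the new variables are interpreted by the
   name and the body of θ(t), which is an abstraction.  For F, swapping the new name with a
   name not occurring in θ preserves satisfaction (by equivariance) and makes the new name
   fresh for every variable. *)

Lemma name_eqb_spec (a b : name) : reflect (a = b) (name_eqb a b).
Proof.
  destruct a as [n1 m1], b as [n2 m2]; unfold name_eqb; simpl.
  destruct (Nat.eqb_spec n1 n2), (Nat.eqb_spec m1 m2); constructor; congruence.
Qed.

Ltac name_cases :=
  unfold nswap in *;
  repeat match goal with
  | |- context [name_eqb ?x ?y] =>
      is_var x; is_var y; destruct (name_eqb_spec x y); subst; simpl
  end; congruence.

Lemma nswap_l a b : nswap a b a = b.
Proof. name_cases. Qed.
Lemma nswap_r a b : nswap a b b = a.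
Proof. name_cases. Qed.
Lemma nswap_other a b c : c <> a -> c <> b -> nswap a b c = c.
Proof. name_cases. Qed.
Lemma nswap_id a c : nswap a a c = c.
Proof. name_cases. Qed.
Lemma nswap_sym a b c : nswap a b c = nswap b a c.
Proof. name_cases. Qed.
Lemma nswap_involutive a b c : nswap a b (nswap a b c) = c.
Proof. name_cases. Qed.
Lemma nswap_nswap a b c d e :
  nswap a b (nswap c d e) = nswap (nswap a b c) (nswap a b d) (nswap a b e).
Proof. name_cases. Qed.
Lemma nswap_inj a b c d : nswap a b c = nswap a b d -> c = d.
Proof. intros E. rewrite <- (nswap_involutive a b c), E. apply nswap_involutive. Qed.
Lemma name_ty_nswap a b c : name_ty a = name_ty b -> name_ty (nswap a b c) = name_ty c.
Proof. intros; name_cases. Qed.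

Lemma Forall2_map_l {A B C} (f : A -> C) (R : C -> B -> Prop) l1 l2 :
  Forall2 (fun x y => R (f x) y) l1 l2 -> Forall2 R (map f l1) l2.
Proof. induction 1; simpl; constructor; auto. Qed.

Lemma Forall_Forall2_impl {A B} {P : A -> Prop} {R S : A -> B -> Prop} {l1 l2} :
  Forall P l1 -> Forall2 R l1 l2 -> (forall x y, P x -> R x y -> S x y) -> Forall2 S l1 l2.
Proof. intros HP HR H. revert HP. induction HR; intros HP; inversion HP; constructor; auto. Qed.

Fixpoint gterm_ind_nested {Sig : signature} (P : gterm Sig -> Prop)
  (Hnm : forall a, P (GNm a)) (Hcon : forall c, P (GCon c))
  (Happ : forall f ts, Forall P ts -> P (GApp f ts))
  (Habs : forall a t, P t -> P (GAbs a t)) (t : gterm Sig) {struct t} : P t :=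
  let rec := gterm_ind_nested P Hnm Hcon Happ Habs in
  match t with
  | GNm a => Hnm a
  | GCon c => Hcon c
  | GApp f ts => Happ f ts
      ((fix all (l : list (gterm Sig)) : Forall P l :=
          match l with
          | [] => Forall_nil _
          | t :: l => Forall_cons _ (rec t) (all l)
          end) ts)
  | GAbs a t => Habs a t (rec t)
  end.

Section GroundSwapping.
Context {Sig : signature}.
Implicit Types t u v : gterm Sig.

Lemma gswap_involutive a b t : gswap a b (gswap a b t) = t.
Proof.
  induction t as [c|c|f ts IH|c t IH] using gterm_ind_nested; simpl;
    rewrite ?nswap_involutive, ?IH; auto.
  f_equal. rewrite map_map. induction IH; simpl; f_equal; auto.
Qed.

Lemma gswap_id a t : gswap a a t = t.
Proof.
  induction t as [c|c|f ts IH|c t IH] using gterm_ind_nested; simpl;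
    rewrite ?nswap_id, ?IH; auto.
  f_equal. induction IH; simpl; f_equal; auto.
Qed.

Lemma gswap_sym a b t : gswap a b t = gswap b a t.
Proof.
  induction t as [c|c|f ts IH|c t IH] using gterm_ind_nested; simpl;
    rewrite ?(nswap_sym a b), ?IH; auto.
  f_equal. induction IH; simpl; f_equal; auto.
Qed.

Lemma gswap_gswap a b c d t :
  gswap a b (gswap c d t) = gswap (nswap a b c) (nswap a b d) (gswap a b t).
Proof.
  induction t as [e|e|f ts IH|e t IH] using gterm_ind_nested; simpl;
    rewrite ?(nswap_nswap a b c d), ?IH; auto.
  f_equal. rewrite !map_map. induction IH; simpl; f_equal; auto.
Qed.

Lemma gfresh_gswap p q c t : gfresh c t -> gfresh (nswap p q c) (gswap p q t).
Proof.
  revert c. induction t as [a|a|f ts IH|a t IH] using gterm_ind_nested;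
    intros c Hc; inversion Hc; subst; clear Hc; simpl.
  - constructor. intros E. apply nswap_inj in E. auto.
  - constructor.
  - constructor. apply Forall_map.
    match goal with H : Forall (gfresh c) ts |- _ => revert H end.
    induction IH; intros Hts; inversion Hts; subst; constructor; auto.
  - apply gf_abs_same.
  - constructor; auto. intros E. apply nswap_inj in E. auto.
Qed.

Lemma gfresh_gswap_other p q c t :
  c <> p -> c <> q -> gfresh c t -> gfresh c (gswap p q t).
Proof. intros. rewrite <- (nswap_other p q c) by auto. apply gfresh_gswap; auto. Qed.

Lemma geq_refl t : geq t t.
Proof.
  induction t as [a|c|f ts IH|a t IH] using gterm_ind_nested; constructor; auto.
  induction IH; constructor; auto.
Qed.

Lemma geq_gswap p q t u : geq t u -> geq (gswap p q t) (gswap p q u).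
Proof.
  revert u. induction t as [a|c|f ts IH|a t IH] using gterm_ind_nested;
    intros u0 Htu; inversion Htu; subst; clear Htu; simpl.
  - constructor.
  - constructor.
  - constructor. match goal with H : Forall2 _ ts ?us |- _ => revert us H end.
    induction IH; intros us Hus; inversion Hus; subst; simpl; constructor; auto.
  - constructor; auto.
  - constructor.
    + intros E. apply nswap_inj in E. auto.
    + apply gfresh_gswap. auto.
    + rewrite <- gswap_gswap. auto.
Qed.

Lemma gfresh_geq c t u : geq t u -> gfresh c t -> gfresh c u.
Proof.
  revert u. induction t as [a|a|f ts IH|a t IH] using gterm_ind_nested;
    intros u0 Htu Hc; inversion Htu; subst; clear Htu.
  - auto.
  - auto.
  - inversion Hc; subst; clear Hc. constructor.
    match goal with H : Forall2 _ ts ?us |- _ => revert us H end.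
    match goal with H : Forall (gfresh c) ts |- _ => revert H end.
    induction IH; intros Hts us Hus; inversion Hus; inversion Hts; subst; constructor; eauto.
  - inversion Hc; subst; [apply gf_abs_same | constructor; eauto].
  - inversion Hc; subst; [constructor; auto|].
    destruct (name_eqb_spec c b) as [->|Hcb]; [apply gf_abs_same|].
    constructor; auto.
    (* [c] is fresh for [(a b).u], and [(a b)] fixes [c]. *)
    assert (Hsw : gfresh c (gswap a b u)) by eauto.
    apply (gfresh_gswap a b) in Hsw.
    rewrite nswap_other, gswap_involutive in Hsw by auto. exact Hsw.
Qed.

Lemma geq_sym t u : geq t u -> geq u t.
Proof.
  revert u. induction t as [a|c|f ts IH|a t IH] using gterm_ind_nested;
    intros u0 Htu; inversion Htu; subst; clear Htu.
  - constructor.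
  - constructor.
  - constructor. match goal with H : Forall2 _ ts ?us |- _ => revert us H end.
    induction IH; intros us Hus; inversion Hus; subst; constructor; auto.
  - constructor. auto.
  - match goal with H : geq t _ |- _ => apply IH in H as Hut end.
    constructor; auto.
    + (* [b] is fresh for [(a b).u] because [a] is fresh for [u] *)
      apply (gfresh_geq _ _ _ Hut).
      rewrite <- (nswap_l a b) at 1. apply gfresh_gswap. auto.
    + rewrite gswap_sym, <- (gswap_involutive a b u). apply geq_gswap. auto.
Qed.

Lemma gswap_fresh_geq p q v : gfresh p v -> gfresh q v -> geq (gswap p q v) v.
Proof.
  induction v as [a|c|f ts IH|a t IH] using gterm_ind_nested; intros Hp Hq;
    inversion Hp; subst; clear Hp; inversion Hq; subst; clear Hq; simpl.
  - rewrite nswap_other by auto. constructor.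
  - constructor.
  - constructor.
    match goal with H1 : Forall (gfresh p) ts, H2 : Forall (gfresh q) ts |- _ => revert H1 H2 end.
    induction IH; intros Hps Hqs; inversion Hps; inversion Hqs; subst; constructor; auto.
  - rewrite nswap_id, gswap_id. apply geq_refl.
  - rewrite nswap_l. constructor; auto. rewrite gswap_sym. apply geq_refl.
  - rewrite nswap_r. constructor; auto. apply geq_refl.
  - rewrite nswap_other by auto. constructor. auto.
Qed.

Lemma geq_trans t u v : geq t u -> geq u v -> geq t v.
Proof.
  revert u v. induction t as [a|c|f ts IH|a t IH] using gterm_ind_nested;
    intros u0 v0 Htu Huv; inversion Htu; subst; clear Htu; inversion Huv; subst; clear Huv.
  - constructor.
  - constructor.
  - constructor. match goal with H1 : Forall2 _ ts ?us, H2 : Forall2 _ ?us ?vs |- _ =>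
      revert us vs H1 H2 end.
    induction IH; intros us vs H1 H2; inversion H1; subst; inversion H2; subst;
      constructor; eauto.
  - constructor. eauto.
  - constructor; eauto using gfresh_geq.
  - constructor; eauto using gfresh_geq.
    eapply IH; [eauto|]. apply geq_gswap. auto.
  - rename b into c, b0 into d, u into w, u0 into v.
    assert (Htv : geq t (gswap a c (gswap c d v))).
    { eapply IH; [eauto|]. apply geq_gswap. auto. }
    destruct (name_eqb_spec a d) as [<-|Had].
    + rewrite (gswap_sym c a), gswap_involutive in Htv. constructor. auto.
    + (* [(a c)(c d) = (a d)(a c)], and [(a c)] fixes [v] as [a, c] are fresh for it *)
      assert (Hav : gfresh a v).
      { assert (Hx : gfresh a (gswap c d v)) by eauto using gfresh_geq.
        apply (gfresh_gswap c d) in Hx.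
        rewrite nswap_other, gswap_involutive in Hx by auto. exact Hx. }
      constructor; auto.
      eapply IH; [exact Htv|].
      rewrite gswap_gswap, nswap_r, (nswap_other a c d) by auto.
      apply geq_gswap, gswap_fresh_geq; auto.
Qed.
End GroundSwapping.

Section GroundTyping.
Context {Sig : signature}.
Implicit Types t : gterm Sig.

Lemma gtyped_TN_inv t nu : gtyped t (TN nu) -> exists c, t = GNm c /\ name_ty c = nu.
Proof. intros H. inversion H. eauto. Qed.

Lemma gtyped_TA_inv t nu tau :
  gtyped t (TA nu tau) -> exists c s, t = GAbs c s /\ name_ty c = nu /\ gtyped s tau.
Proof. intros H. inversion H. eauto. Qed.

Lemma gtyped_gswap p q t tau :
  name_ty p = name_ty q -> gtyped t tau -> gtyped (gswap p q t) tau.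
Proof.
  intros Hpq. revert tau.
  induction t as [a|c|f ts IH|a t IH] using gterm_ind_nested;
    intros tau Ht; inversion Ht; subst; clear Ht; simpl.
  - rewrite <- (name_ty_nswap p q a) by auto. constructor.
  - constructor.
  - constructor. apply Forall2_map_l. apply (Forall_Forall2_impl IH H2); auto.
  - rewrite <- (name_ty_nswap p q a) by auto. constructor. auto.
Qed.
End GroundTyping.

Fixpoint term_ind_nested {Sig : signature} (P : term Sig -> Prop)
  (Hfv : forall x, P (FVar x)) (Hbv : forall i, P (BVar i))
  (Hfn : forall a, P (FNm a)) (Hbn : forall i, P (BNm i)) (Hcon : forall c, P (TCon c))
  (Happ : forall f ts, Forall P ts -> P (TApp f ts))
  (Hswap : forall a b t, P a -> P b -> P t -> P (TSwap a b t))
  (Habs : forall a t, P a -> P t -> P (TAbs a t)) (t : term Sig) {struct t} : P t :=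
  let rec := term_ind_nested P Hfv Hbv Hfn Hbn Hcon Happ Hswap Habs in
  match t with
  | FVar x => Hfv x
  | BVar i => Hbv i
  | FNm a => Hfn a
  | BNm i => Hbn i
  | TCon c => Hcon c
  | TApp f ts => Happ f ts
      ((fix all (l : list (term Sig)) : Forall P l :=
          match l with
          | [] => Forall_nil _
          | t :: l => Forall_cons _ (rec t) (all l)
          end) ts)
  | TSwap a b t => Hswap a b t (rec a) (rec b) (rec t)
  | TAbs a t => Habs a t (rec a) (rec t)
  end.

Definition typed_interp {Sig} (th : interp Sig) (Sg : ctx) : Prop :=
  forall x tau, In (CVar x tau) Sg -> gtyped (th x) tau.

Lemma ctx_ok_var_ty Sg x tau1 tau2 :
  ctx_ok Sg -> In (CVar x tau1) Sg -> In (CVar x tau2) Sg -> tau1 = tau2.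
Proof.
  unfold ctx_ok. induction Sg as [|e Sg IH]; simpl; [tauto|].
  intros Hok. inversion Hok as [|? ? Hnin Hok']; subst.
  intros [->|H1] [E2|H2]; subst.
  - congruence.
  - apply in_map with (f := csym) in H2. contradiction.
  - apply in_map with (f := csym) in H1. contradiction.
  - auto.
Qed.

Section Evaluation.
Context {Sig : signature}.
Implicit Types (th : interp Sig) (t u s : term Sig).

Lemma typ_weaken Sg Sg' t Bv Bn tau : incl Sg Sg' -> typ Sg Bv Bn t tau -> typ Sg' Bv Bn t tau.
Proof.
  intros Hinc. revert tau.
  induction t as [x|i|a|i|c|f ts IH|a b t IHa IHb IHt|a t IHa IHt] using term_ind_nested;
    intros tau Ht; inversion Ht; subst; clear Ht; econstructor; eauto.
  apply (Forall_Forall2_impl IH H2); auto.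
Qed.

Lemma typ_unique Sg t Bv Bn tau1 tau2 :
  ctx_ok Sg -> typ Sg Bv Bn t tau1 -> typ Sg Bv Bn t tau2 -> tau1 = tau2.
Proof.
  intros Hok. revert tau1 tau2.
  induction t as [x|i|a|i|c|f ts IH|a b t IHa IHb IHt|a t IHa IHt] using term_ind_nested;
    intros tau1 tau2 H1 H2; inversion H1; subst; clear H1; inversion H2; subst; clear H2;
    try congruence; eauto.
  - eapply ctx_ok_var_ty; eauto.
  - f_equal; eauto.
    match goal with H1 : typ _ _ _ a (TN ?n1), H2 : typ _ _ _ a (TN ?n2) |- _ =>
      specialize (IHa _ _ H1 H2) end. congruence.
Qed.

Lemma eval_typed th Sg t tau : typed_interp th Sg -> wt Sg t tau -> gtyped (eval th t) tau.
Proof.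
  intros Hth. revert tau.
  induction t as [x|i|a|i|c|f ts IH|a b t IHa IHb IHt|a t IHa IHt] using term_ind_nested;
    intros tau Ht; inversion Ht; subst; clear Ht; simpl.
  - eauto.
  - destruct i; discriminate.
  - constructor.
  - destruct i; discriminate.
  - constructor.
  - constructor. apply Forall2_map_l. apply (Forall_Forall2_impl IH H2); auto.
  - match goal with Ha : typ _ _ _ a _, Hb : typ _ _ _ b _ |- _ =>
      apply IHa, gtyped_TN_inv in Ha as [c1 [-> E1]];
      apply IHb, gtyped_TN_inv in Hb as [c2 [-> E2]] end.
    apply gtyped_gswap; [congruence | auto].
  - match goal with Ha : typ _ _ _ a _ |- _ =>
      apply IHa, gtyped_TN_inv in Ha as [c [-> <-]] end.
    constructor. auto.
Qed.

Lemma eval_name th Sg a nu : typed_interp th Sg -> wt Sg a (TN nu) ->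
  exists c, eval th a = GNm c /\ name_ty c = nu.
Proof. intros Hth Ha. apply gtyped_TN_inv, (eval_typed th) with (Sg := Sg); auto. Qed.

Lemma eval_agree th th' Sg t Bv Bn tau :
  (forall x tau, In (CVar x tau) Sg -> th' x = th x) ->
  typ Sg Bv Bn t tau -> eval th' t = eval th t.
Proof.
  intros Hag. revert tau.
  induction t as [x|i|a|i|c|f ts IH|a b t IHa IHb IHt|a t IHa IHt] using term_ind_nested;
    intros tau Ht; inversion Ht; subst; clear Ht; simpl; eauto.
  - f_equal. match goal with H : Forall2 _ ts _ |- _ => revert H end.
    generalize (fsym_args f).
    induction IH; intros args Hargs; inversion Hargs; subst; simpl; f_equal; eauto.
  - erewrite IHa, IHb, IHt; eauto.
  - erewrite IHa, IHt; eauto.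
Qed.

Lemma typ_open_tv_replace Sg t u s tau sigma :
  ctx_ok Sg -> wt Sg t tau -> wt Sg u tau ->
  wt Sg (open_tv 0 t s) sigma -> wt Sg (open_tv 0 u s) sigma.
Proof.
  intros Hok Ht Hu. revert sigma. unfold wt in *.
  induction s as [x|i|a|i|c|f ts IH|a b s IHa IHb IHs|a s IHa IHs] using term_ind_nested;
    intros sigma Hs; simpl in *; auto.
  - destruct (Nat.eqb i 0); auto.
    rewrite (typ_unique Sg t [] [] sigma tau); auto.
  - inversion Hs; subst; clear Hs. constructor.
    match goal with H : Forall2 _ _ _ |- _ => revert H end.
    generalize (fsym_args f).
    induction IH; intros args Hargs; inversion Hargs; subst; constructor; auto.
  - inversion Hs; subst. econstructor; eauto.
  - inversion Hs; subst. econstructor; eauto.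
Qed.

Lemma geq_GNm_l c (g : gterm Sig) : geq (GNm c) g -> g = GNm c.
Proof. intros H. inversion H. auto. Qed.

Lemma geq_GNm_r c (g : gterm Sig) : geq g (GNm c) -> g = GNm c.
Proof. intros H. inversion H. auto. Qed.

(* No typing hypothesis is needed: the junk values of ill-typed swaps and abstractions agree too. *)
Lemma eval_open_tv_geq th t u s k :
  geq (eval th t) (eval th u) -> geq (eval th (open_tv k t s)) (eval th (open_tv k u s)).
Proof.
  intros Htu. revert k.
  induction s as [x|i|a|i|c|f ts IH|a b s IHa IHb IHs|a s IHa IHs] using term_ind_nested;
    intros k; simpl; try apply geq_refl.
  - destruct (Nat.eqb i k); auto using geq_refl.
  - constructor. induction IH; simpl; constructor; auto.
  - specialize (IHa k); specialize (IHb k); specialize (IHs k).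
    destruct (eval th (open_tv k t a)) eqn:Ea;
      try (destruct (eval th (open_tv k u a)); try (apply geq_GNm_r in IHa; discriminate); auto; fail).
    apply geq_GNm_l in IHa. rewrite IHa.
    destruct (eval th (open_tv k t b)) eqn:Eb;
      try (destruct (eval th (open_tv k u b)); try (apply geq_GNm_r in IHb; discriminate); auto; fail).
    apply geq_GNm_l in IHb. rewrite IHb. apply geq_gswap. auto.
  - specialize (IHa k); specialize (IHs k).
    destruct (eval th (open_tv k t a)) eqn:Ea;
      try (destruct (eval th (open_tv k u a)); try (apply geq_GNm_r in IHa; discriminate); auto; fail).
    apply geq_GNm_l in IHa. rewrite IHa. constructor. auto.
Qed.

Lemma eval_gswap_interp th Sg p q t tau :
  (forall c, In (CNm c) Sg -> c <> p /\ c <> q) -> wt Sg t tau ->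
  eval (fun y => gswap p q (th y)) t = gswap p q (eval th t).
Proof.
  intros Hn. revert tau. unfold wt.
  induction t as [x|i|a|i|c|f ts IH|a b t IHa IHb IHt|a t IHa IHt] using term_ind_nested;
    intros tau Ht; inversion Ht; subst; clear Ht; simpl.
  - auto.
  - destruct i; discriminate.
  - match goal with H : In (CNm a) Sg |- _ => destruct (Hn _ H) end.
    rewrite nswap_other; auto.
  - destruct i; discriminate.
  - auto.
  - f_equal. rewrite map_map. match goal with H : Forall2 _ ts _ |- _ => revert H end.
    generalize (fsym_args f).
    induction IH; intros args Hargs; inversion Hargs; subst; simpl; f_equal; eauto.
  - erewrite IHa, IHb, IHt by eauto.
    destruct (eval th a); simpl; auto.
    destruct (eval th b); simpl; auto.
    symmetry. apply gswap_gswap.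
  - erewrite IHa, IHt by eauto.
    destruct (eval th a); simpl; auto.
Qed.

Lemma gfresh_eval th Sg p t tau :
  typed_interp th Sg ->
  (forall x tau, In (CVar x tau) Sg -> gfresh p (th x)) ->
  (forall c, In (CNm c) Sg -> c <> p) ->
  wt Sg t tau -> gfresh p (eval th t).
Proof.
  intros Hth Hv Hn. revert tau. unfold wt.
  induction t as [x|i|a|i|c|f ts IH|a b t IHa IHb IHt|a t IHa IHt] using term_ind_nested;
    intros tau Ht; inversion Ht; subst; clear Ht; simpl.
  - eauto.
  - destruct i; discriminate.
  - constructor. intros ->. eapply Hn; eauto.
  - destruct i; discriminate.
  - constructor.
  - constructor. apply Forall_map. match goal with H : Forall2 _ ts _ |- _ => revert H end.
    generalize (fsym_args f).
    induction IH; intros args Hargs; inversion Hargs; subst; constructor; eauto.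
  - match goal with Ha : typ _ _ _ a _, Hb : typ _ _ _ b _ |- _ =>
      pose proof (IHa _ Ha) as Fa; pose proof (IHb _ Hb) as Fb;
      destruct (eval_name th Sg a _ Hth Ha) as [c1 [E1 _]];
      destruct (eval_name th Sg b _ Hth Hb) as [c2 [E2 _]] end.
    rewrite E1, E2 in *. inversion Fa. inversion Fb.
    apply gfresh_gswap_other; eauto.
  - match goal with Ha : typ _ _ _ a _ |- _ =>
      pose proof (IHa _ Ha) as Fa; destruct (eval_name th Sg a _ Hth Ha) as [c [Ec _]] end.
    rewrite Ec in *. inversion Fa. constructor; eauto.
Qed.
End Evaluation.

Definition eqfresh_wf {Sig} (Sg : ctx) (A : form Sig) : Prop :=
  is_eq_or_fresh A /\ wff Sg [] [] A.

Section Satisfaction.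
Context {Sig : signature}.
Implicit Types (th : interp Sig) (t u s a b : term Sig) (A : form Sig).

Lemma eqfresh_wf_eq Sg t u tau : wt Sg t tau -> wt Sg u tau -> eqfresh_wf Sg (FEq t u).
Proof. split; [exact I | econstructor; eauto]. Qed.

Lemma eqfresh_wf_fresh Sg a t nu tau :
  wt Sg a (TN nu) -> wt Sg t tau -> eqfresh_wf Sg (FFr a t).
Proof. split; [exact I | econstructor; eauto]. Qed.

Lemma eqfresh_wf_eq_inv Sg t u : eqfresh_wf Sg (FEq t u) -> exists tau, wt Sg t tau /\ wt Sg u tau.
Proof. intros [_ H]. inversion H. eauto. Qed.

Lemma eqfresh_wf_fresh_inv Sg a t :
  eqfresh_wf Sg (FFr a t) -> exists nu tau, wt Sg a (TN nu) /\ wt Sg t tau.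
Proof. intros [_ H]. inversion H. eauto. Qed.

Lemma eqfresh_wf_weaken Sg Sg' A : incl Sg Sg' -> eqfresh_wf Sg A -> eqfresh_wf Sg' A.
Proof.
  intros Hinc HA. destruct A; try solve [destruct HA as [[] _]].
  - apply eqfresh_wf_eq_inv in HA as [tau [Ht Hu]].
    eapply eqfresh_wf_eq; eapply typ_weaken; eauto.
  - apply eqfresh_wf_fresh_inv in HA as [nu [tau [Ha Ht]]].
    eapply eqfresh_wf_fresh; eapply typ_weaken; eauto.
Qed.

Lemma sat_agree th th' Sg A :
  (forall x tau, In (CVar x tau) Sg -> th' x = th x) ->
  eqfresh_wf Sg A -> sat th A -> sat th' A.
Proof.
  intros Hag HA. destruct A; try solve [destruct HA as [[] _]].
  - apply eqfresh_wf_eq_inv in HA as [tau [Ht Hu]]. simpl.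
    erewrite (eval_agree th th' Sg t), (eval_agree th th' Sg u); eauto.
  - apply eqfresh_wf_fresh_inv in HA as [nu [tau [Ha Ht]]]. simpl.
    erewrite (eval_agree th th' Sg a), (eval_agree th th' Sg t); eauto.
Qed.

Lemma sat_gswap_interp th Sg p q A :
  (forall c, In (CNm c) Sg -> c <> p /\ c <> q) ->
  eqfresh_wf Sg A -> sat th A -> sat (fun y => gswap p q (th y)) A.
Proof.
  intros Hn HA. destruct A; try solve [destruct HA as [[] _]].
  - apply eqfresh_wf_eq_inv in HA as [tau [Ht Hu]]. simpl.
    erewrite !eval_gswap_interp by eauto. apply geq_gswap.
  - apply eqfresh_wf_fresh_inv in HA as [nu [tau [Ha Ht]]]. simpl.
    erewrite !eval_gswap_interp by eauto.
    destruct (eval th a); simpl; try contradiction. apply gfresh_gswap.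
Qed.

Lemma eqfresh_wf_open_replace Sg t u P :
  ctx_ok Sg -> eqfresh_wf Sg (FEq t u) ->
  eqfresh_wf Sg (open_fv 0 t P) -> eqfresh_wf Sg (open_fv 0 u P).
Proof.
  intros Hok Htu HP. apply eqfresh_wf_eq_inv in Htu as [tau [Ht Hu]].
  destruct P; try solve [destruct HP as [[] _]]; simpl in *.
  - apply eqfresh_wf_eq_inv in HP as [sigma [H1 H2]].
    eapply eqfresh_wf_eq; eapply (typ_open_tv_replace _ t u _ tau); eauto.
  - apply eqfresh_wf_fresh_inv in HP as [nu [sigma [H1 H2]]].
    eapply eqfresh_wf_fresh; eapply (typ_open_tv_replace _ t u _ tau); eauto.
Qed.

Lemma sat_open_replace th t u P :
  sat th (FEq t u) -> sat th (open_fv 0 t P) -> sat th (open_fv 0 u P).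
Proof.
  intros Htu HP. destruct P; try contradiction; simpl in *.
  - pose proof (eval_open_tv_geq th t u t0 0 Htu) as E1.
    pose proof (eval_open_tv_geq th t u u0 0 Htu) as E2.
    eauto using geq_trans, geq_sym.
  - pose proof (eval_open_tv_geq th t u a 0 Htu) as E1.
    pose proof (eval_open_tv_geq th t u t0 0 Htu) as E2.
    destruct (eval th (open_tv 0 t a)); try contradiction.
    apply geq_GNm_l in E1. rewrite E1. eauto using gfresh_geq.
Qed.
End Satisfaction.

Section NominalAxioms.
Context {Sig : signature}.
Implicit Types (th : interp Sig) (Ps Qs : list (form Sig)).

Lemma ax_inst_wf Sg Ps Qs :
  ax_inst Sg Ps Qs -> Forall (eqfresh_wf Sg) Ps -> Forall (eqfresh_wf Sg) Qs.
Proof.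
  unfold wt. intros Hax HPs.
  destruct Hax; repeat first [apply Forall_nil | apply Forall_cons];
    try solve [eapply eqfresh_wf_eq; repeat econstructor; eauto
              | eapply eqfresh_wf_fresh; eauto].
  - match goal with H : in_Tm _ _ |- _ => destruct H as [? Hf]; inversion Hf; subst end.
    eapply eqfresh_wf_eq; [econstructor; eauto|].
    constructor. apply Forall2_map_l.
    eapply Forall2_impl; [|eassumption]. intros; econstructor; eauto.
  - match goal with H : in_Tm _ _ |- _ => destruct H as [? Hf]; inversion Hf; subst end.
    eapply eqfresh_wf_eq; repeat (econstructor; eauto).
  - match goal with H : in_Tm _ _ |- _ => destruct H as [? Hf]; inversion Hf; subst end.
    eapply eqfresh_wf_eq; repeat (econstructor; eauto).
  - (* E3 for relations: its premise is not an equality or freshness formula *)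
    inversion HPs as [|? ? HR]. destruct HR as [[] _].
  - match goal with H : wff _ _ _ (FEq _ _) |- _ => inversion H; subst end.
    eapply eqfresh_wf_eq; econstructor; eauto.
  - match goal with H : wff _ _ _ (FFr _ _) |- _ => inversion H; subst end.
    eapply eqfresh_wf_fresh; econstructor; eauto.
Qed.

Ltac eval_names th :=
  repeat match goal with
  | Hth : typed_interp th ?Sg, H : typ ?Sg [] [] ?a (TN _) |- _ =>
      let c := fresh "c" in
      let E := fresh "E" in
      destruct (eval_name th Sg a _ Hth H) as [c [E ?]]; clear H; rewrite ?E in *
  end.

Lemma ax_inst_valid th Sg Ps Qs :
  typed_interp th Sg -> ax_inst Sg Ps Qs -> Forall (sat th) Ps -> Exists (sat th) Qs.
Proof.
  intros Hth Hax HPs.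
  destruct Hax; unfold wt in *; try match goal with H : in_Tm _ _ |- _ =>
    destruct H as [? Hf]; inversion Hf; subst; clear Hf end;
    try match goal with H : wff _ _ _ _ |- _ => inversion H; subst; clear H end;
    repeat match goal with H : Forall _ (_ :: _) |- _ => inversion H; subst; clear H end;
    try match goal with |- Exists _ [_] => apply Exists_cons_hd end;
    simpl in *; eval_names th; simpl in *.
  - rewrite gswap_id. apply geq_refl.
  - rewrite gswap_involutive. apply geq_refl.
  - rewrite nswap_l. constructor.
  - constructor.
  - rewrite !map_map. simpl. rewrite E, E0. apply geq_refl.
  - rewrite gswap_gswap. apply geq_refl.
  - apply geq_refl.
  - contradiction.
  - apply geq_gswap. assumption.
  - apply gfresh_gswap. assumption.
  - apply gswap_fresh_geq; assumption.
  - (* F2: names of distinct types differ *) constructor. congruence.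
  - match goal with H : gfresh _ (GNm _) |- _ => inversion H end. congruence.
  - destruct (name_eqb_spec c0 c) as [<-|Hne].
    + apply Exists_cons_tl, Exists_cons_hd. simpl. rewrite E, E0. constructor.
    + apply Exists_cons_hd. simpl. rewrite E, E0. constructor. assumption.
  - destruct (name_eqb_spec c0 c) as [<-|Hne].
    + rewrite gswap_id in *. constructor. assumption.
    + constructor; assumption.
Qed.
End NominalAxioms.

Section Contexts.
Context {Sig : signature}.
Implicit Types (th : interp Sig) (t : term Sig).

Lemma ctx_ok_cons_var Sg x tau : var_notin x Sg -> ctx_ok Sg -> ctx_ok (CVar x tau :: Sg).
Proof.
  intros Hx Hok. constructor; [|exact Hok].
  intros Hin. apply in_map_iff in Hin as [[y sigma|b] [E Hin]]; inversion E; subst.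
  eapply Hx; eauto.
Qed.

Lemma ctx_ok_cons_name Sg a : nm_notin a Sg -> ctx_ok Sg -> ctx_ok (CNm a :: Sg).
Proof.
  intros Ha Hok. constructor; [|exact Hok].
  intros Hin. apply in_map_iff in Hin as [[y sigma|b] [E Hin]]; inversion E; subst. auto.
Qed.

Lemma in_bars_name Sg a t : in_bars Sg a t -> exists b, a = FNm b /\ In (CNm b) Sg.
Proof.
  induction 1 as [Sg b t _|e Sg b t _ [c [-> Hc]]]; eexists; split; eauto; simpl; auto.
Qed.

Lemma in_bars_var Sg a y : in_bars Sg a (@FVar Sig y) -> exists tau, In (CVar y tau) Sg.
Proof.
  remember (@FVar Sig y) as t eqn:Et. induction 1 as [Sg b t [tau Ht]|e Sg b t _ IH]; subst.
  - inversion Ht. exists tau. simpl. auto.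
  - destruct IH as [tau Hin]; auto. exists tau. simpl. auto.
Qed.

Lemma interp_of_tail th e Sg : interp_of th (e :: Sg) -> interp_of th Sg.
Proof.
  intros [Hty Hfr]. split.
  - intros x tau H. apply Hty. simpl. auto.
  - intros a x H. apply Hfr. apply bars_there. auto.
Qed.

Lemma in_bars_sound th Sg a t :
  ctx_ok Sg -> interp_of th Sg -> in_bars Sg a t -> eqfresh_wf Sg (FFr a t) /\ sat th (FFr a t).
Proof.
  intros Hok Hth Hb. revert Hok Hth.
  induction Hb as [Sg b t [tau Ht]|e Sg b t Hb IH]; intros Hok Hth.
  - assert (Hinc : incl Sg (CNm b :: Sg)) by (intros ? ?; simpl; auto).
    split.
    + eapply eqfresh_wf_fresh; [constructor; simpl; auto | eapply typ_weaken; eauto].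
    + (* [b] is fresh for the variables of [Sg] by [interp_of], and for its names by [ctx_ok] *)
      simpl. eapply gfresh_eval with (Sg := Sg); [| | |exact Ht].
      * intros x sigma Hx. apply (proj1 Hth). simpl. auto.
      * intros x sigma Hx. apply (proj2 Hth). constructor. exists sigma. constructor. auto.
      * intros c Hc ->. inversion Hok as [|? ? Hnin _]. apply Hnin.
        apply (in_map csym) in Hc. exact Hc.
  - inversion Hok. destruct (IH ltac:(assumption) (interp_of_tail _ _ _ Hth)) as [Hwf Hsat].
    split; [|exact Hsat]. eapply eqfresh_wf_weaken; [|exact Hwf]. intros ? ?; simpl; auto.
Qed.

Definition interp_update th x (g : gterm Sig) : interp Sig :=
  fun y => if Nat.eqb y x then g else th y.

Lemma interp_update_notin th Sg x g :
  var_notin x Sg -> forall y tau, In (CVar y tau) Sg -> interp_update th x g y = th y.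
Proof.
  intros Hx y tau Hy. unfold interp_update.
  destruct (Nat.eqb_spec y x) as [->|]; [exfalso; eapply Hx; eauto | reflexivity].
Qed.

Lemma interp_of_update th Sg x tau g :
  var_notin x Sg -> gtyped g tau -> interp_of th Sg ->
  interp_of (interp_update th x g) (CVar x tau :: Sg).
Proof.
  intros Hx Hg [Hty Hfr]. split.
  - intros y sigma [E|Hy].
    + inversion E; subst. unfold interp_update. rewrite Nat.eqb_refl. exact Hg.
    + erewrite interp_update_notin by eauto. auto.
  - intros a y Hb. inversion Hb as [|? ? ? ? Hb']; subst.
    destruct (in_bars_var _ _ _ Hb') as [sigma Hy].
    erewrite interp_update_notin by eauto. auto.
Qed.
End Contexts.

Fixpoint gnames {Sig} (t : gterm Sig) : list name :=
  match t with
  | GNm a => [a]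
  | GCon _ => []
  | GApp _ ts => flat_map gnames ts
  | GAbs a t => a :: gnames t
  end.

Lemma gfresh_notin_gnames {Sig} p (t : gterm Sig) : ~ In p (gnames t) -> gfresh p t.
Proof.
  induction t as [a|c|f ts IH|a t IH] using gterm_ind_nested; simpl; intros H.
  - constructor. intros ->. auto.
  - constructor.
  - constructor. induction IH; constructor; simpl in H; rewrite in_app_iff in H; auto.
  - constructor; auto.
Qed.

Lemma exists_name_notin (l : list name) nu : exists a, name_ty a = nu /\ ~ In a l.
Proof.
  exists (nu, S (list_max (map snd l))). split; [reflexivity|]. intros Hin.
  apply (in_map snd) in Hin.
  pose proof (proj1 (Forall_forall _ _) (proj1 (list_max_le _ _) (le_n _)) _ Hin).
  simpl in *. lia.
Qed.

Section Renaming.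
Context {Sig : signature}.
Implicit Types (th : interp Sig).

Lemma exists_name_fresh_for_interp th Sg nu : exists a,
  name_ty a = nu /\ nm_notin a Sg /\ forall x tau, In (CVar x tau) Sg -> gfresh a (th x).
Proof.
  pose (used := flat_map (fun e => match e with CVar x _ => gnames (th x) | CNm b => [b] end) Sg).
  destruct (exists_name_notin used nu) as [a [Ha Hnin]].
  exists a. repeat split; auto.
  - intros Hin. apply Hnin, in_flat_map. exists (CNm a). simpl. auto.
  - intros x tau Hx. apply gfresh_notin_gnames. intros Hin.
    apply Hnin, in_flat_map. exists (CVar x tau). auto.
Qed.

Lemma interp_of_rename th Sg a a' :
  name_ty a' = name_ty a -> nm_notin a Sg -> nm_notin a' Sg ->
  (forall x tau, In (CVar x tau) Sg -> gfresh a' (th x)) -> interp_of th Sg ->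
  interp_of (fun y => gswap a a' (th y)) (CNm a :: Sg).
Proof.
  intros Hty Ha Ha' Hfr' [Hth Hfr]. split.
  - intros y tau [E|Hy]; [discriminate|]. apply gtyped_gswap; auto.
  - intros b y Hb. inversion Hb as [? ? ? [tau Hy]|? ? ? ? Hb']; subst.
    + inversion Hy; subst.
      match goal with |- gfresh ?c (gswap ?c ?d _) => rewrite <- (nswap_r c d) at 1 end.
      apply gfresh_gswap. eauto.
    + destruct (in_bars_name _ _ _ Hb') as [b' [Eb Hb'']]. inversion Eb; subst.
      apply gfresh_gswap_other; [congruence | congruence | auto].
Qed.
End Renaming.

Definition refuted {Sig} (Sg : ctx) (G : list (form Sig)) : Prop :=
  ctx_ok Sg -> Forall (eqfresh_wf Sg) G ->
  forall th, interp_of th Sg -> ~ Forall (sat th) G.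

Section RefutationRules.
Context {Sig : signature}.
Implicit Types (G : list (form Sig)) (t u a b : term Sig).

Lemma refuted_perm Sg G G' : Permutation G G' -> refuted Sg G -> refuted Sg G'.
Proof.
  intros Hp HG Hok Hwf th Hth Hsat. apply Permutation_sym in Hp.
  apply (HG Hok) with th; auto; eapply Permutation_Forall; eassumption.
Qed.

Lemma refuted_eqR Sg G t : in_Tm Sg t -> refuted Sg (FEq t t :: G) -> refuted Sg G.
Proof.
  intros [tau Ht] HG Hok Hwf th Hth Hsat.
  apply (HG Hok) with th; auto.
  - constructor; [eapply eqfresh_wf_eq|]; eauto.
  - constructor; [apply geq_refl | exact Hsat].
Qed.

Lemma refuted_eqS Sg G t u P :
  refuted Sg (open_fv 0 u P :: FEq t u :: open_fv 0 t P :: G) ->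
  refuted Sg (FEq t u :: open_fv 0 t P :: G).
Proof.
  intros HG Hok Hwf th Hth Hsat.
  inversion Hwf as [|? ? Weq Hwf']; inversion Hwf' as [|? ? WP _]; subst.
  inversion Hsat as [|? ? Seq Hsat']; inversion Hsat' as [|? ? SP _]; subst.
  apply (HG Hok) with th; auto.
  - constructor; [eapply eqfresh_wf_open_replace|]; eauto.
  - constructor; [eapply sat_open_replace|]; eauto.
Qed.

Lemma refuted_ax Sg G Ps Qs :
  ax_inst Sg Ps Qs -> (forall Q, In Q Qs -> refuted Sg (Q :: Ps ++ G)) -> refuted Sg (Ps ++ G).
Proof.
  intros Hax HQs Hok Hwf th Hth Hsat.
  pose proof Hwf as HwfPs. apply Forall_app in HwfPs as [HwfPs _].
  pose proof Hsat as HsatPs. apply Forall_app in HsatPs as [HsatPs _].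
  pose proof (ax_inst_wf Sg Ps Qs Hax HwfPs) as HwfQs.
  pose proof (ax_inst_valid th Sg Ps Qs (proj1 Hth) Hax HsatPs) as HsatQs.
  apply Exists_exists in HsatQs as [Q [HQ SQ]].
  apply (HQs Q HQ Hok) with th; auto.
  constructor; auto. rewrite Forall_forall in HwfQs. auto.
Qed.

Lemma refuted_A2 Sg G a b t u :
  refuted Sg (FEq a b :: FEq t u :: FEq (TAbs a t) (TAbs b u) :: G) ->
  refuted Sg (FFr a u :: FEq t (TSwap a b u) :: FEq (TAbs a t) (TAbs b u) :: G) ->
  refuted Sg (FEq (TAbs a t) (TAbs b u) :: G).
Proof.
  intros Hsame Hdiff Hok Hwf th Hth Hsat.
  inversion Hwf as [|? ? WE _]; inversion Hsat as [|? ? SE _]; subst.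
  apply eqfresh_wf_eq_inv in WE as [tau [Hat Hbu]].
  inversion Hat as [| | | | | | |nu ? ? ? Ha Ht]; subst.
  inversion Hbu as [| | | | | | |nu' ? ? ? Hb Hu]; subst.
  destruct (eval_name th Sg a _ (proj1 Hth) Ha) as [c [Ea _]].
  destruct (eval_name th Sg b _ (proj1 Hth) Hb) as [d [Eb _]].
  simpl in SE. rewrite Ea, Eb in SE.
  inversion SE; subst.
  - apply (Hsame Hok) with th; auto.
    + constructor; [eapply eqfresh_wf_eq; eauto|].
      constructor; [eapply eqfresh_wf_eq; eauto | exact Hwf].
    + constructor; [simpl; rewrite Ea, Eb; constructor|].
      constructor; [assumption | exact Hsat].
  - apply (Hdiff Hok) with th; auto.
    + constructor; [eapply eqfresh_wf_fresh; eauto|].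
      constructor; [eapply eqfresh_wf_eq; [|econstructor]; eauto | exact Hwf].
    + constructor; [simpl; rewrite Ea; assumption|].
      constructor; [simpl; rewrite Ea, Eb; assumption | exact Hsat].
Qed.

Lemma refuted_A3 Sg G t nu sigma (a x : nat) :
  wt Sg t (TA nu sigma) -> var_notin a Sg -> var_notin x Sg -> a <> x ->
  refuted (CVar x sigma :: CVar a (TN nu) :: Sg) (FEq t (TAbs (FVar a) (FVar x)) :: G) ->
  refuted Sg G.
Proof.
  intros Ht Ha Hx Hax HG Hok Hwf th Hth Hsat.
  destruct (gtyped_TA_inv _ _ _ (eval_typed th Sg t _ (proj1 Hth) Ht)) as [c [s [Et [Hc Hs]]]].
  set (Sg' := CVar x sigma :: CVar a (TN nu) :: Sg).
  set (th' := interp_update (interp_update th a (GNm c)) x s).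
  assert (Hx' : var_notin x (CVar a (TN nu) :: Sg)).
  { intros tau [E|Hin]; [congruence | eapply Hx; eauto]. }
  assert (Hinc : incl Sg Sg') by (intros e He; simpl; auto).
  assert (Hagree : forall y tau, In (CVar y tau) Sg -> th' y = th y).
  { intros y tau Hy. unfold th'.
    rewrite (interp_update_notin _ _ _ _ Hx' y tau), (interp_update_notin _ _ _ _ Ha y tau);
      simpl; auto. }
  apply (HG (ctx_ok_cons_var _ _ _ Hx' (ctx_ok_cons_var _ _ _ Ha Hok))) with th'.
  - constructor.
    + eapply eqfresh_wf_eq; [eapply typ_weaken; eauto|].
      econstructor; constructor; simpl; auto.
    + eapply Forall_impl; [|exact Hwf]. intros A. apply eqfresh_wf_weaken. exact Hinc.
  - apply interp_of_update; auto. rewrite <- Hc. apply interp_of_update; auto. constructor.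
  - constructor.
    + simpl. rewrite (eval_agree th th' Sg t [] [] _ Hagree Ht), Et.
      unfold th', interp_update. rewrite Nat.eqb_refl, (proj2 (Nat.eqb_neq a x) Hax), Nat.eqb_refl.
      apply geq_refl.
    + eapply Forall_impl; [|exact (Forall_and Hwf Hsat)].
      intros A [HA SA]. eapply sat_agree; eauto.
Qed.

Lemma refuted_F Sg G (a : name) : nm_notin a Sg -> refuted (CNm a :: Sg) G -> refuted Sg G.
Proof.
  intros Ha HG Hok Hwf th Hth Hsat.
  destruct (exists_name_fresh_for_interp th Sg (name_ty a)) as [a' [Hty [Ha' Hfr]]].
  apply (HG (ctx_ok_cons_name _ _ Ha Hok)) with (fun y => gswap a a' (th y)).
  - eapply Forall_impl; [|exact Hwf]. intros A. apply eqfresh_wf_weaken. intros e He; simpl; auto.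
  - apply interp_of_rename; auto.
  - eapply Forall_impl; [|exact (Forall_and Hwf Hsat)].
    intros A [HA SA]. eapply sat_gswap_interp; eauto.
    intros c Hc. split; intros ->; auto.
Qed.

Lemma refuted_SigmaFr Sg G a t : in_bars Sg a t -> refuted Sg (FFr a t :: G) -> refuted Sg G.
Proof.
  intros Hb HG Hok Hwf th Hth Hsat.
  destruct (in_bars_sound th Sg a t Hok Hth Hb) as [HA SA].
  apply (HG Hok) with th; auto.
Qed.
End RefutationRules.

Lemma deriv_bot_refuted {Sig} Sg (G D : list (form Sig)) :
  deriv Sg G D -> D = [FBot] -> refuted Sg G.
Proof.
  induction 1; intros HD; try discriminate;
    try (injection HD as -> ->; contradiction);
    try solve [unfold refuted; intros _ Hwf; inversion Hwf as [|? ? HA _]; destruct HA as [[] _]].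
  - apply refuted_perm with G; auto.
  - subst. apply Permutation_sym, Permutation_length_1_inv in H. auto.
  - eapply refuted_eqR; eauto.
  - apply refuted_eqS; auto.
  - eapply refuted_ax; eauto.
  - apply refuted_A2; auto.
  - apply (refuted_A3 Sg G t nu sigma a x); auto.
  - eapply refuted_F; eauto.
  - eapply refuted_SigmaFr; eauto.
Qed.

Theorem mainTheorem8 (Sig : signature) (Sg : ctx) (G : list (form Sig)) :
  ctx_ok Sg ->
  Forall (fun A => is_eq_or_fresh A /\ wff Sg [] [] A) G ->
  deriv Sg G [FBot] ->
  ~ (exists th : interp Sig, interp_of th Sg /\ Forall (sat th) G).
Proof.
  intros Hok Hwf Hd [th [Hth Hsat]].
  exact (deriv_bot_refuted Sg G [FBot] Hd eq_refl Hok Hwf th Hth Hsat).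
Qed.
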